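(* Let $S=\{x_1,\dots,x_N\}\subset\mathbb{R}^n$ be a two-distance tight frame for $\mathbb{R}^n$ with inner products $a,b$, $a^2\neq b^2$. Let $\Gamma_1$ be the graph on vertex set $\{1,\dots,N\}$ in which distinct $i,j$ are adjacent iff $\langle x_i,x_j\rangle=a$, and $\Gamma_2$ its complement (adjacency iff $\langle x_i,x_j\rangle=b$). Then $\Gamma_1$ and $\Gamma_2$ are strongly regular graphs: they are regular, any two adjacent vertices have the same number of common neighbours, and any two nonadjacent vertices have the same number of common neighbours.
   Context: A two-distance tight frame for $\mathbb{R}^n$ is a finite set of unit vectors $\{x_1,\dots,x_N\}\subset\mathbb{R}^n$ such that there are two real numbers $a\neq b$ with $\langle x_i,x_j\rangle\in\{a,b\}$ for all $i\neq j$, and $\sum_{i=1}^N\langle x,x_i\rangle^2=\frac{N}{n}\|x\|^2$ for all $x\in\mathbb{R}^n$. *)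

(* Vectors of R^n are row vectors 'rV[R]_n over an arbitrary
   real field R (the statement is purely algebraic; R = reals is an instance). *)
From HB Require Import structures.
From mathcomp Require Import all_boot all_order all_algebra.
Set Implicit Arguments. Unset Strict Implicit. Unset Printing Implicit Defensive.
Import Order.TTheory GRing.Theory Num.Theory.
Local Open Scope ring_scope.

Definition dotv (R : ringType) (n : nat) (u v : 'rV[R]_n) : R := (u *m v^T) 0 0.

Definition two_distance_tight_frame (R : realFieldType) (n N : nat)
    (x : 'I_N -> 'rV[R]_n) (a b : R) : Prop :=
  [/\ injective x,
      (forall i, dotv (x i) (x i) = 1),
      a != b,
      (forall i j, i != j -> dotv (x i) (x j) = a \/ dotv (x i) (x j) = b)
    & (forall v : 'rV[R]_n,
         \sum_(i < N) (dotv v (x i)) ^+ 2 = (N%:R / n%:R) * dotv v v)].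

Definition ip_graph (R : ringType) (n N : nat) (x : 'I_N -> 'rV[R]_n) (c : R)
  : rel 'I_N := fun i j => (i != j) && (dotv (x i) (x j) == c).

(* strongly regular graph (simple graph given by a symmetric irreflexive relation) *)
Definition strongly_regular (T : finType) (e : rel T) : Prop :=
  [/\ exists k : nat, forall i, #|[set j | e i j]| = k,
      exists l : nat, forall i j, i != j -> e i j ->
                        #|[set k | e i k && e j k]| = l
    & exists m : nat, forall i j, i != j -> ~~ e i j ->
                        #|[set k | e i k && e j k]| = m].

From HB Require Import structures.
From mathcomp Require Import all_boot all_order all_algebra ring.
Import Order.TTheory GRing.Theory Num.Theory.
Set Implicit Arguments. Unset Strict Implicit. Unset Printing Implicit Defensive.
Local Open Scope ring_scope.

(* Let A be the adjacency relation of the graph "inner product a".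
   Every Gram entry of the frame is an affine combination of a Kronecker delta
   and the adjacency indicator:  <x_i, x_l> = b + (1-b) [l = i] + (a-b) A(i,l).
   By polarization, tightness gives  \sum_l <x_i,x_l><x_j,x_l> = c <x_i,x_j>
   with c = N/n.  Expanding the left-hand side with the Gram formula expresses
   it through the degrees of i and j, the adjacency A(i,j) and the number of
   common neighbours of i and j (lemma [sum_affine_adjacency_products]).
   - For i = j this gives (a^2 - b^2) deg i = constant, so the graph is regular.
   - For i <> j, once degrees are constant, (a-b)^2 (common neighbours of i, j)
     is a function of A(i,j) alone.
   A general criterion ([strongly_regular_of_counts]) turns these two facts
   into strong regularity.  The graph for b is the graph for a of the same
   frame with the roles of a and b swapped, which settles the second graph. *)

Lemma dotvE (R : comNzRingType) n (u v : 'rV[R]_n) :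
  dotv u v = \sum_k u 0 k * v 0 k.
Proof. by rewrite /dotv mxE; apply: eq_bigr => k _; rewrite mxE. Qed.

Lemma dotvC (R : comNzRingType) n (u v : 'rV[R]_n) : dotv u v = dotv v u.
Proof. by rewrite !dotvE; apply: eq_bigr => k _; rewrite mulrC. Qed.

Lemma dotvDl (R : comNzRingType) n (u v w : 'rV[R]_n) :
  dotv (u + v) w = dotv u w + dotv v w.
Proof. by rewrite !dotvE -big_split; apply: eq_bigr => k _; rewrite mxE mulrDl. Qed.

Lemma dotvDr (R : comNzRingType) n (u v w : 'rV[R]_n) :
  dotv w (u + v) = dotv w u + dotv w v.
Proof. by rewrite dotvC dotvDl !(dotvC w). Qed.

Lemma frame_polarization (R : numFieldType) n (I : finType)
    (x : I -> 'rV[R]_n) (c : R) :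
  (forall v, \sum_i (dotv v (x i)) ^+ 2 = c * dotv v v) ->
  forall u v, \sum_i dotv u (x i) * dotv v (x i) = c * dotv u v.
Proof.
move=> frame u v.
have expand_sum : \sum_i (dotv (u + v) (x i)) ^+ 2 =
    \sum_i (dotv u (x i)) ^+ 2 + \sum_i (dotv v (x i)) ^+ 2 +
    2 * \sum_i dotv u (x i) * dotv v (x i).
  by rewrite mulr_sumr -!big_split /=; apply: eq_bigr => i _; rewrite dotvDl; ring.
rewrite !frame dotvDl !dotvDr (dotvC v u) in expand_sum.
have two_neq0 : (2 : R) != 0 by rewrite pnatr_eq0.
apply: (mulfI two_neq0); apply: (addrI (c * dotv u u + c * dotv v v)).
by rewrite -expand_sum; ring.
Qed.

Definition degree (T : finType) (e : rel T) (i : T) : nat := #|[set j | e i j]|.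

Definition common_nbrs (T : finType) (e : rel T) (i j : T) : nat :=
  #|[set k | e i k && e j k]|.

Lemma strongly_regular_of_counts (T : finType) (e : rel T) :
  (forall i j, degree e i = degree e j) ->
  (forall i j i' j', i != j -> i' != j' -> e i j = e i' j' ->
     common_nbrs e i j = common_nbrs e i' j') ->
  strongly_regular e.
Proof.
move=> regular common_eq.
have constant_on (P : pred (T * T)) (f : T * T -> nat) :
    {in P &, forall p q, f p = f q} -> exists m, forall p, P p -> f p = m.
  move=> f_const; case: (pickP P) => [p0 Pp0 | noP]; last first.
    by exists 0%N => p; rewrite noP.
  by exists (f p0) => p Pp; apply: f_const.
split.
- case: (constant_on predT (fun p => degree e p.1)) => [p q _ _|k degk].
    exact: regular.
  by exists k => i; apply: (degk (i, i)).
- case: (constant_on [pred p | (p.1 != p.2) && e p.1 p.2]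
                     (fun p => common_nbrs e p.1 p.2)) => [|l Hl].
    move=> [i j] [i' j'] /andP[ij eij] /andP[ij' eij'].
    by apply: common_eq; rewrite ?eij ?eij'.
  by exists l => i j ij eij; apply: (Hl (i, j)); rewrite /= ij eij.
- case: (constant_on [pred p | (p.1 != p.2) && ~~ e p.1 p.2]
                     (fun p => common_nbrs e p.1 p.2)) => [|m Hm].
    move=> [i j] [i' j'] /andP[ij /negbTE eij] /andP[ij' /negbTE eij'].
    by apply: common_eq; rewrite ?eij ?eij'.
  by exists m => i j ij eij; apply: (Hm (i, j)); rewrite /= ij eij.
Qed.

Lemma sum_indicator (R : pzRingType) (T : finType) (P : pred T) :
  \sum_l (P l)%:R = #|[set l | P l]|%:R :> R.
Proof.
rewrite -natr_sum -sum1_card big_mkcond [in RHS]big_mkcond /=.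
by congr (_%:R); apply: eq_bigr => l _; rewrite inE; case: (P l).
Qed.

Lemma sum_delta_mull (R : pzRingType) (T : finType) (F : T -> R) i :
  \sum_l (l == i)%:R * F l = F i.
Proof. by rewrite (bigD1 i) //= eqxx mul1r big1 ?addr0 // => l /negbTE ->; rewrite mul0r. Qed.

Lemma sum_delta_mulr (R : pzRingType) (T : finType) (F : T -> R) i :
  \sum_l F l * (l == i)%:R = F i.
Proof. by rewrite (bigD1 i) //= eqxx mulr1 big1 ?addr0 // => l /negbTE ->; rewrite mulr0. Qed.

Lemma sum_delta (R : pzRingType) (T : finType) (i : T) : \sum_l (l == i)%:R = 1 :> R.
Proof.
by rewrite -[RHS](sum_delta_mull (fun=> 1) i); apply: eq_bigr => l _; rewrite mulr1.
Qed.

Lemma sum_affine_adjacency_products (R : comNzRingType) (T : finType)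
    (A : rel T) (p q r : R) :
  (forall i j, A i j = A j i) ->
  let g i l := p + q * (l == i)%:R + r * (A i l)%:R in
  forall i j, \sum_l g i l * g j l =
    p ^+ 2 * #|T|%:R + 2 * p * q + p * r * ((degree A i)%:R + (degree A j)%:R)
    + q ^+ 2 * (i == j)%:R + 2 * q * r * (A i j)%:R
    + r ^+ 2 * (common_nbrs A i j)%:R.
Proof.
move=> A_sym g i j.
have indicator_and l : ((A i l && A j l)%:R : R) = (A i l)%:R * (A j l)%:R.
  by case: (A i l); case: (A j l); rewrite /= ?(mul1r, mul0r).
rewrite (eq_bigr (fun l => p ^+ 2 + p * q * (l == j)%:R + p * r * (A j l)%:R
    + q * p * (l == i)%:R + q ^+ 2 * ((l == i)%:R * (l == j)%:R)
    + q * r * ((l == i)%:R * (A j l)%:R) + r * p * (A i l)%:R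
    + r * q * ((A i l)%:R * (l == j)%:R) + r ^+ 2 * (A i l && A j l)%:R)); last first.
  by move=> l _; rewrite /g indicator_and; ring.
rewrite !big_split /= sumr_const -!mulr_sumr !sum_delta_mull sum_delta_mulr !sum_delta.
rewrite (A_sym j i) !sum_indicator /degree /common_nbrs -mulr_natr; ring.
Qed.

Section TwoDistanceTightFrame.

Variables (R : realFieldType) (n N : nat) (x : 'I_N -> 'rV[R]_n) (a b : R).
Hypothesis frame : two_distance_tight_frame x a b.
Hypothesis a2_neq_b2 : a ^+ 2 != b ^+ 2.

Let A := ip_graph x a.
Let c : R := N%:R / n%:R.

Lemma ip_graph_sym : forall i j, A i j = A j i.
Proof. by move=> i j; rewrite /A /ip_graph eq_sym dotvC. Qed.

Lemma frame_gram i l :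
  dotv (x i) (x l) = b + (1 - b) * (l == i)%:R + (a - b) * (A i l)%:R.
Proof.
case: frame => _ unit_norm a_neq_b two_values _.
rewrite /A /ip_graph; have [->|l_neq_i] := eqVneq l i.
  by rewrite unit_norm /=; ring.
have i_neq_l : i != l by rewrite eq_sym.
rewrite /=; case: (two_values i l i_neq_l) => ->.
  by rewrite eqxx /=; ring.
by rewrite eq_sym (negbTE a_neq_b) /=; ring.
Qed.

(* Tightness, written entrywise in terms of the graph. *)
Lemma frame_counting i j :
  c * dotv (x i) (x j) =
    b ^+ 2 * N%:R + 2 * b * (1 - b) + b * (a - b) * ((degree A i)%:R + (degree A j)%:R)
    + (1 - b) ^+ 2 * (i == j)%:R + 2 * (1 - b) * (a - b) * (A i j)%:R
    + (a - b) ^+ 2 * (common_nbrs A i j)%:R.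
Proof.
case: frame => _ _ _ _ tight.
have := sum_affine_adjacency_products b (1 - b) (a - b) ip_graph_sym i j.
rewrite card_ord => <-; rewrite -(frame_polarization tight).
by apply: eq_bigr => l _; rewrite !frame_gram.
Qed.

(* Diagonal entries: (a^2 - b^2) deg i is independent of i. *)
Lemma ip_graph_regular i j : degree A i = degree A j.
Proof.
case: frame => _ unit_norm _ _ _.
have deg_formula k : (a ^+ 2 - b ^+ 2) * (degree A k)%:R =
    c - b ^+ 2 * N%:R - 2 * b * (1 - b) - (1 - b) ^+ 2.
  have := frame_counting k k; rewrite unit_norm eqxx mulr1.
  have -> : A k k = false by rewrite /A /ip_graph eqxx.
  have -> : common_nbrs A k k = degree A k.
    by apply: eq_card => l; rewrite !inE andbb.
  by move=> -> /=; ring.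
have a2_sub_b2_neq0 : a ^+ 2 - b ^+ 2 != 0 by rewrite subr_eq0.
apply/eqP; rewrite -(eqr_nat R); apply/eqP.
by apply: (mulfI a2_sub_b2_neq0); rewrite !deg_formula.
Qed.

(* Off-diagonal entries: common neighbours of distinct i, j depend on A(i,j). *)
Lemma ip_graph_common_nbrs i j i' j' : i != j -> i' != j' -> A i j = A i' j' ->
  common_nbrs A i j = common_nbrs A i' j'.
Proof.
case: frame => _ _ a_neq_b _ _.
have common_formula k l : k != l -> (a - b) ^+ 2 * (common_nbrs A k l)%:R =
    c * (b + (a - b) * (A k l)%:R) - b ^+ 2 * N%:R - 2 * b * (1 - b)
    - 2 * b * (a - b) * (degree A i)%:R - 2 * (1 - b) * (a - b) * (A k l)%:R.
  move=> k_neq_l; have := frame_counting k l.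
  rewrite frame_gram (ip_graph_regular k i) (ip_graph_regular l i).
  rewrite (negbTE k_neq_l) eq_sym (negbTE k_neq_l) /= => count.
  have -> : c * (b + (a - b) * (A k l)%:R) = c * (b + (1 - b) * 0 + (a - b) * (A k l)%:R).
    by ring.
  rewrite count; ring.
have sq_a_sub_b_neq0 : (a - b) ^+ 2 != 0 by rewrite expf_neq0 // subr_eq0.
move=> i_neq_j i'_neq_j' same_adj; apply/eqP; rewrite -(eqr_nat R); apply/eqP.
apply: (mulfI sq_a_sub_b_neq0).
by rewrite (common_formula _ _ i_neq_j) (common_formula _ _ i'_neq_j') same_adj.
Qed.

Lemma ip_graph_strongly_regular : strongly_regular A.
Proof. exact: strongly_regular_of_counts ip_graph_regular ip_graph_common_nbrs. Qed.

End TwoDistanceTightFrame.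

Lemma two_distance_tight_frame_sym (R : realFieldType) n N
    (x : 'I_N -> 'rV[R]_n) (a b : R) :
  two_distance_tight_frame x a b -> two_distance_tight_frame x b a.
Proof.
case=> inj unit_norm a_neq_b two_values tight; split; rewrite 1?eq_sym //.
by move=> i j /two_values[]; [right | left].
Qed.

Theorem proposition3p2 (R : realFieldType) (n N : nat)
    (x : 'I_N -> 'rV[R]_n) (a b : R) :
  two_distance_tight_frame x a b ->
  a ^+ 2 != b ^+ 2 ->
  strongly_regular (ip_graph x a) /\ strongly_regular (ip_graph x b).
Proof.
move=> frame a2_neq_b2; split; first exact: ip_graph_strongly_regular frame a2_neq_b2.
apply: ip_graph_strongly_regular (two_distance_tight_frame_sym frame) _.
by rewrite eq_sym.
Qed.
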